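(* If $t$ is an odd positive integer, then there does not exist a skew starter in $\mathbb{Z}_{3t}$.
   Context: A skew starter in $\mathbb{Z}_g$ ($g$ odd) is a set of $(g-1)/2$ unordered pairs $\{\{x_i,y_i\}\}$ such that $\{x_i,y_i\}=\mathbb{Z}_g\setminus\{0\}$, $\{\pm(x_i-y_i)\}=\mathbb{Z}_g\setminus\{0\}$, and $\{\pm(x_i+y_i)\}=\mathbb{Z}_g\setminus\{0\}$. *)

From mathcomp Require Import all_boot all_order all_algebra.
Set Implicit Arguments. Unset Strict Implicit. Unset Printing Implicit Defensive.
Import GRing.Theory.
Local Open Scope ring_scope.

Definition nonzeroZ (g : nat) : seq 'Z_g := [seq z <- enum 'Z_g | z != 0].

(* A skew starter in Z_g (g odd): a list of (g-1)/2 pairs {x_i, y_i}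
   (order inside a pair is irrelevant since all conditions are symmetric)
   such that the multisets {x_i, y_i}, {±(x_i - y_i)} and {±(x_i + y_i)}
   are each exactly Z_g \ {0}. *)
Definition is_skew_starter (g : nat) (s : seq ('Z_g * 'Z_g)) : bool :=
  [&& odd g,
      size s == g.-1./2,
      perm_eq (flatten [seq [:: p.1; p.2] | p <- s]) (nonzeroZ g),
      perm_eq (flatten [seq [:: p.1 - p.2; p.2 - p.1] | p <- s]) (nonzeroZ g) &
      perm_eq (flatten [seq [:: p.1 + p.2; - (p.1 + p.2)] | p <- s]) (nonzeroZ g)].

From mathcomp Require Import all_boot all_order all_algebra.
From mathcomp Require Import zify ring.
Set Implicit Arguments. Unset Strict Implicit. Unset Printing Implicit Defensive.
Import GRing.Theory.
Local Open Scope ring_scope.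

(* Let S be the sum of the squares of the nonzero elements of Z_g.  For every
   pair, (x - y)^2 + (y - x)^2 + (x + y)^2 + (-(x + y))^2 = 4 (x^2 + y^2), so the
   three covering conditions of a skew starter give S + S = 4 S, i.e. 2 S = 0 in
   Z_g.  But 2 S = g (g - 1) (2 g - 1) / 3 as an integer, and when 3 divides g the
   factor (g - 1) (2 g - 1) is 1 mod 3, so g does not divide 2 S. *)

Lemma sum_sqr_diffs_sums (R : comPzRingType) (s : seq (R * R)) :
  \sum_(z <- flatten [seq [:: p.1 - p.2; p.2 - p.1] | p <- s]) z ^+ 2
  + \sum_(z <- flatten [seq [:: p.1 + p.2; - (p.1 + p.2)] | p <- s]) z ^+ 2
  = (\sum_(z <- flatten [seq [:: p.1; p.2] | p <- s]) z ^+ 2) *+ 4.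
Proof.
rewrite !big_flatten !big_map -big_split -sumrMnl /=.
by apply: eq_bigr => p _; rewrite !big_cons !big_nil; ring.
Qed.

Lemma skew_starter_sum_sqr (g : nat) (s : seq ('Z_g * 'Z_g)) :
  is_skew_starter s -> (\sum_(z <- nonzeroZ g) z ^+ 2) *+ 2 = 0.
Proof.
case/and5P=> _ _ cover_elems cover_diffs cover_sums.
have := sum_sqr_diffs_sums s.
rewrite !(perm_big _ cover_elems, perm_big _ cover_diffs, perm_big _ cover_sums).
set S := \sum_(z <- nonzeroZ g) _ => sum_eq.
by apply: (@addrI _ (S *+ 2)); rewrite addr0 -mulrnDr -sum_eq mulr2n.
Qed.

Lemma Zp_natr_eq0 (n m : nat) : (1 < n)%N -> (m%:R == 0 :> 'Z_n) = (n %| m)%N.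
Proof. by move=> n_gt1; rewrite -(inj_eq val_inj) /= val_Zp_nat // Zp_cast. Qed.

Lemma sum_sqr_nonzeroZ (g : nat) : (1 < g)%N ->
  \sum_(z <- nonzeroZ g) z ^+ 2 = (\sum_(0 <= i < g) i ^ 2)%N%:R :> 'Z_g.
Proof.
move=> g_gt1.
have -> : (\sum_(0 <= i < g) i ^ 2 = \sum_(i : 'Z_g) val i ^ 2)%N.
  by rewrite -{1}(Zp_cast g_gt1) big_mkord.
rewrite natr_sum big_filter big_mkcond big_enum /=; apply: eq_bigr => i _.
by case: eqP => [->|_]; rewrite ?expr0n // natrX natr_Zp.
Qed.

Lemma sum_sqr_nat (n : nat) : (6 * \sum_(0 <= i < n) i ^ 2 = n * (n - 1) * (2 * n - 1))%N.
Proof.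
elim: n => [|n IHn]; first by rewrite big_geq.
by rewrite big_nat_recr //= mulnDr IHn; case: n {IHn} => [|n] //; rewrite !subn1 /=; nia.
Qed.

Lemma mul3_ndvdn_double_sum_sqr (n : nat) : (0 < n)%N -> (3 %| n)%N ->
  ~~ (n %| (\sum_(0 <= i < n) i ^ 2).*2)%N.
Proof.
move=> n_gt0 /dvdnP [m n_eq]; apply/negP => /dvdnP [k double_eq].
have sum_eq := sum_sqr_nat n; rewrite -mul2n in double_eq.
have : (n * (3 * k) = n * ((n - 1) * (2 * n - 1)))%N by nia.
move/eqP; rewrite eqn_pmul2l // => /eqP cofactor_eq.
have : (3 * k + 9 * m = 18 * (m * m) + 1)%N by rewrite n_eq in cofactor_eq n_gt0; nia.
lia.
Qed.

Theorem mainTheorem7 (t : nat) : (0 < t)%N -> odd t ->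
  ~ exists s : seq ('Z_(3 * t) * 'Z_(3 * t)), is_skew_starter s.
Proof.
move=> t_gt0 _ [s starter].
have g_gt1 : (1 < 3 * t)%N by lia.
have := skew_starter_sum_sqr starter.
rewrite sum_sqr_nonzeroZ // -mulr_natr -natrM => /eqP.
rewrite Zp_natr_eq0 // muln2; apply/negP.
by apply: mul3_ndvdn_double_sum_sqr; rewrite ?muln_gt0 ?dvdn_mulr.
Qed.
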